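(* Let $k\ge 2$ and let $P=(p_1,\dots,p_k)$ and $Q=(q_1,\dots,q_k)$ be two multinomial (categorical) probability distributions over the same index set $\{1,\dots,k\}$. Suppose the indices of the largest probabilities of $P$ and $Q$ do not match, i.e. $\arg\max_i p_i \neq \arg\max_j q_j$. Then $$d_{B}(Q,P)\;\ge\; -\log\left(\sqrt{\frac{2\sqrt{p_{(1)}p_{(2)}}-p_{(1)}-p_{(2)}+2}{2}}\right),$$ where $p_{(1)}$ and $p_{(2)}$ denote the first and second largest probabilities among $p_1,\dots,p_k$.
   Context: The Bhattacharyya distance is $d_B(Q,P)=-\log\Bigl(\sum_{i=1}^k\sqrt{p_iq_i}\Bigr)$. *)

From HB Require Import structures.
From mathcomp Require Import all_boot all_order all_algebra.
From mathcomp Require Import all_classical all_reals all_analysis.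
Set Implicit Arguments. Unset Strict Implicit. Unset Printing Implicit Defensive.
Import Order.TTheory GRing.Theory Num.Theory.
Local Open Scope ring_scope.

Definition is_distr (R : realType) (k : nat) (p : 'I_k -> R) : Prop :=
  (forall i, 0 <= p i) /\ \sum_(i < k) p i = 1.

Definition argmax_set (R : realType) (k : nat) (p : 'I_k -> R) : {set 'I_k} :=
  [set i | [forall j, p j <= p i]].

Definition bhat_coef (R : realType) (k : nat) (q p : 'I_k -> R) : R :=
  \sum_(i < k) Num.sqrt (p i * q i).

Definition bhat_dist (R : realType) (k : nat) (q p : 'I_k -> R) : \bar R :=
  if bhat_coef q p == 0 then +oo%E else (- ln (bhat_coef q p))%:E.

Definition sorted_probs (R : realType) (k : nat) (p : 'I_k -> R) : seq R :=
  sort (fun x y : R => y <= x) [seq p i | i <- enum 'I_k].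

Definition p_first (R : realType) (k : nat) (p : 'I_k -> R) : R :=
  nth 0 (sorted_probs p) 0.
Definition p_second (R : realType) (k : nat) (p : 'I_k -> R) : R :=
  nth 0 (sorted_probs p) 1.

From HB Require Import structures.
From mathcomp Require Import all_boot all_order all_algebra.
From mathcomp Require Import all_classical all_reals all_analysis.
Import Order.TTheory GRing.Theory Num.Theory.
Local Open Scope ring_scope.
From mathcomp Require Import ring lra.

(* Let a be a mode of P and pick b <> a with q_a <= q_b, which is possible
   because the modes of P and Q differ; then p_b <= p_(2) <= p_(1) <= p_a.
   With s^2 = 1 - (sqrt p_(1) - sqrt p_(2))^2 / 2, the weighted AM-GM bound
   sqrt (p_i q_i) <= p_i / (2 s) + s q_i / 2 on the indices other than a and b,
   together with a rearrangement argument on the two terms at a and b, yields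
   BC(P, Q) <= s, and s is exactly the argument of the logarithm. *)

Set Implicit Arguments.
Unset Strict Implicit.
Unset Printing Implicit Defensive.

Section ArgmaxSet.
Variables (R : realType) (k : nat).
Implicit Types (p q : 'I_k -> R).

Lemma argmax_setP p i : reflect (forall j, p j <= p i) (i \in argmax_set p).
Proof. by rewrite inE; apply: forallP. Qed.

Lemma argmax_set_strict p a :
  (forall j, j != a -> p j < p a) -> argmax_set p = [set a]%SET.
Proof.
move=> lt_a; apply/setP => i; rewrite [RHS]inE; apply/argmax_setP/eqP => [max_i|->].
  by apply/eqP/negPn/negP => /lt_a; rewrite ltNge max_i.
by move=> j; case: (eqVneq j a) => [->//|/lt_a/ltW].
Qed.

Lemma argmax_set_neq_witness p q : (0 < k)%N ->
  argmax_set p != argmax_set q ->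
  exists a b, [/\ a \in argmax_set p, b != a & q a <= q b].
Proof.
move=> k_gt0 neq_pq.
have [a0 _ max_a0] := @arg_maxP _ _ _ (Ordinal k_gt0) xpredT p isT.
have a0_max : a0 \in argmax_set p by apply/argmax_setP => j; apply: max_a0.
case: (boolP [exists b, (b != a0) && (q a0 <= q b)]).
  by move=> /existsP[b /andP[ba0 qb]]; exists a0, b.
rewrite negb_exists => /forallP q_lt; have {}q_lt j : j != a0 -> q j < q a0.
  by move=> ja0; move: (q_lt j); rewrite ja0 /= -ltNge.
case: (boolP [exists a, (a \in argmax_set p) && (a != a0)]).
  by move=> /existsP[a /andP[a_max aa0]]; exists a, a0; rewrite eq_sym (ltW (q_lt _ aa0)).
rewrite negb_exists => /forallP p_max; case/negP: neq_pq.
have -> : argmax_set p = [set a0]%SET.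
  apply/setP => i; rewrite finset.in_set1; apply/idP/eqP => [i_max|->//].
  by apply/eqP; move: (p_max i); rewrite i_max /= negbK.
by rewrite (argmax_set_strict q_lt).
Qed.

End ArgmaxSet.

Lemma sorted_ge_count_gt_nth1 (R : realDomainType) (s : seq R) :
  sorted (fun x y => y <= x) s -> (count (fun z => s`_1 < z)%R s <= 1)%N.
Proof.
case: s => [|x [|y t]] //=; first by rewrite addn0 leq_b1.
move=> /andP[_ path_yt].
have ge_trans : transitive (fun x y : R => y <= x) by move=> ? ? ? /[swap]; apply: le_trans.
have /allP t_le_y := order_path_min ge_trans path_yt.
have -> : count (fun z => y < z) t = 0%N.
  by rewrite -(count_pred0 t); apply: eq_in_count => z /t_le_y /=; rewrite ltNge => ->.
by rewrite ltxx addn0; case: (y < x)%R.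
Qed.

Section SortedProbs.
Variables (R : realType) (k : nat).
Implicit Types (p : 'I_k -> R).

Lemma sorted_probs_sorted p : sorted (fun x y => y <= x) (sorted_probs p).
Proof. by apply: sort_sorted => x y; apply: le_total. Qed.

Lemma size_sorted_probs p : size (sorted_probs p) = k.
Proof. by rewrite size_sort size_map size_enum_ord. Qed.

Lemma mem_sorted_probs p x : (x \in sorted_probs p) = (x \in codom p).
Proof. by rewrite codomE (perm_mem (permEl (perm_sort _ _))). Qed.

Lemma p_second_ge0 p : (forall i, 0 <= p i) -> 0 <= p_second p.
Proof.
move=> p_ge0; rewrite /p_second.
case: (ltnP 1 (size (sorted_probs p))) => [lt1|le1]; last by rewrite nth_default.
have /codomP[i ->] : nth 0 (sorted_probs p) 1 \in codom p.
  by rewrite -mem_sorted_probs mem_nth.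
exact: p_ge0.
Qed.

Lemma p_second_le_first p : (1 < k)%N -> p_second p <= p_first p.
Proof.
rewrite /p_second /p_first -{1}(size_sorted_probs p).
by move: (sorted_probs_sorted p); case: (sorted_probs p) => [|x [|y t]] //= /andP[].
Qed.

Lemma p_first_le_max p a : a \in argmax_set p -> p_first p <= p a.
Proof.
move=> /argmax_setP a_max; rewrite /p_first.
have size_gt0 : (0 < size (sorted_probs p))%N.
  by rewrite size_sorted_probs (leq_ltn_trans _ (ltn_ord a)).
have /codomP[i ->] : nth 0 (sorted_probs p) 0 \in codom p.
  by rewrite -mem_sorted_probs mem_nth.
exact: a_max.
Qed.

Lemma card_gt_p_second p : (#|[pred i | (p_second p < p i)%R]| <= 1)%N.
Proof.
have := sorted_ge_count_gt_nth1 (sorted_probs_sorted p).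
rewrite (permP (permEl (perm_sort _ _))) count_map -/(p_second p).
rewrite cardE /enum_mem size_filter count_filter; apply: leq_trans.
by apply/eq_leq/eq_count => i; rewrite !inE andbT.
Qed.

Lemma p_second_ge_other p a b :
  a \in argmax_set p -> b != a -> p b <= p_second p.
Proof.
move=> /argmax_setP a_max ba; rewrite leNgt; apply/negP => gt_b.
have gt_a : p_second p < p a := lt_le_trans gt_b (a_max b).
move/card_le1_eqP: (card_gt_p_second p) => /(_ b a gt_b gt_a) eq_ba.
by rewrite eq_ba eqxx in ba.
Qed.

End SortedProbs.

Lemma sqrtrM_le_amgm (R : rcfType) (x y t : R) : 0 <= x -> 0 <= y -> 0 < t ->
  Num.sqrt (x * y) <= x / (2 * t) + t * y / 2.
Proof.
move=> x_ge0 y_ge0 t_gt0; rewrite sqrtrM // -subr_ge0.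
rewrite -{1}(sqr_sqrtr x_ge0) -{1}(sqr_sqrtr y_ge0).
have -> : Num.sqrt x ^+ 2 / (2 * t) + t * Num.sqrt y ^+ 2 / 2 - Num.sqrt x * Num.sqrt y
          = (Num.sqrt x - t * Num.sqrt y) ^+ 2 / (2 * t) by field; rewrite gt_eqF.
by rewrite divr_ge0 ?sqr_ge0 ?mulr_ge0 ?ltW.
Qed.

Lemma sum_sqrtrM_le_amgm (R : rcfType) (I : finType) (P : pred I) (x y : I -> R) t :
  (forall i, 0 <= x i) -> (forall i, 0 <= y i) -> 0 < t ->
  \sum_(i | P i) Num.sqrt (x i * y i)
    <= (\sum_(i | P i) x i) / (2 * t) + t * (\sum_(i | P i) y i) / 2.
Proof.
move=> x_ge0 y_ge0 t_gt0; rewrite mulr_suml mulr_sumr mulr_suml -big_split /=.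
by apply: ler_sum => i _; apply: sqrtrM_le_amgm.
Qed.

Lemma two_point_bound (R : realFieldType) (al be ga de d s : R) :
  0 <= be -> 0 <= ga -> ga <= de -> 0 <= d -> d <= al - be ->
  0 < s -> s ^+ 2 = 1 - d ^+ 2 / 2 ->
  al * ga + be * de + (1 - al ^+ 2 - be ^+ 2) / (2 * s)
    + s * (1 - ga ^+ 2 - de ^+ 2) / 2 <= s.
Proof.
move=> be_ge0 ga_ge0 ga_le_de d_ge0 d_le s_gt0 s_sq.
have rearrangement : s * (2 * (al * ga + be * de)) <= s * ((al + be) * (ga + de)).
  rewrite ler_pM2l // -subr_ge0.
  have -> : (al + be) * (ga + de) - 2 * (al * ga + be * de) = (al - be) * (de - ga) by ring.
  by apply: mulr_ge0; lra.
have amgm : s * ((al + be) * (ga + de)) <= ((al + be) ^+ 2 + s ^+ 2 * (ga + de) ^+ 2) / 2.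
  rewrite -subr_ge0.
  have -> : ((al + be) ^+ 2 + s ^+ 2 * (ga + de) ^+ 2) / 2 - s * ((al + be) * (ga + de))
            = (al + be - s * (ga + de)) ^+ 2 / 2 by field.
  by rewrite divr_ge0 ?sqr_ge0.
have qm : s ^+ 2 * (ga + de) ^+ 2 <= s ^+ 2 * (2 * (ga ^+ 2 + de ^+ 2)).
  rewrite ler_wpM2l ?sqr_ge0 // -subr_ge0.
  have -> : 2 * (ga ^+ 2 + de ^+ 2) - (ga + de) ^+ 2 = (ga - de) ^+ 2 by ring.
  exact: sqr_ge0.
have gap : d ^+ 2 <= (al - be) ^+ 2 by rewrite ler_sqr ?nnegrE //; lra.
rewrite -(ler_pM2l (_ : 0 < 2 * s)); last by lra.
have -> : 2 * s * (al * ga + be * de + (1 - al ^+ 2 - be ^+ 2) / (2 * s)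
                    + s * (1 - ga ^+ 2 - de ^+ 2) / 2)
          = s * (2 * (al * ga + be * de)) + (1 - al ^+ 2 - be ^+ 2)
            + s ^+ 2 * (1 - ga ^+ 2 - de ^+ 2) by field; lra.
nra.
Qed.

Section Bhattacharyya.
Variables (R : realType) (k : nat).
Implicit Types (p q : 'I_k -> R).

Lemma is_distr_le1 p i : is_distr p -> p i <= 1.
Proof.
by move=> [p_ge0 <-]; rewrite (bigD1 i) //= lerDl sumr_ge0.
Qed.

Lemma bhat_coef_le_split p q a b t : is_distr p -> is_distr q -> b != a -> 0 < t ->
  bhat_coef q p <= Num.sqrt (p a * q a) + Num.sqrt (p b * q b)
                   + (1 - p a - p b) / (2 * t) + t * (1 - q a - q b) / 2.
Proof.
move=> [p_ge0 p_sum] [q_ge0 q_sum] ba t_gt0.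
have sum_split (F : 'I_k -> R) :
    \sum_i F i = F a + F b + \sum_(i | (i != a) && (i != b)) F i.
  by rewrite (bigD1 a) //= (bigD1 b) //= addrA.
have rest_p : 1 - p a - p b = \sum_(i | (i != a) && (i != b)) p i.
  by rewrite -p_sum sum_split; ring.
have rest_q : 1 - q a - q b = \sum_(i | (i != a) && (i != b)) q i.
  by rewrite -q_sum sum_split; ring.
rewrite /bhat_coef sum_split -[X in _ <= X]addrA lerD2l rest_p rest_q.
exact: sum_sqrtrM_le_amgm.
Qed.

Lemma bhat_dist_ge p q t : (forall i, 0 <= p i) -> (forall i, 0 <= q i) ->
  0 < t -> bhat_coef q p <= t -> ((- ln t)%:E <= bhat_dist q p)%E.
Proof.
move=> p_ge0 q_ge0 t_gt0 coef_le; rewrite /bhat_dist.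
have [_|coef_neq0] := eqVneq (bhat_coef q p) 0; first by rewrite leey.
have coef_gt0 : 0 < bhat_coef q p.
  by rewrite lt_def coef_neq0 sumr_ge0 // => i _; apply: sqrtr_ge0.
by rewrite lee_fin lerN2 ler_ln ?posrE.
Qed.

End Bhattacharyya.

Lemma sqrt_gap_sqr (R : rcfType) (x y : R) : 0 <= x -> 0 <= y ->
  (2 * Num.sqrt (x * y) - x - y + 2) / 2 = 1 - (Num.sqrt x - Num.sqrt y) ^+ 2 / 2.
Proof.
move=> x_ge0 y_ge0; rewrite sqrtrM // -{2}(sqr_sqrtr x_ge0) -{2}(sqr_sqrtr y_ge0).
by field.
Qed.

Theorem mainTheorem4 (R : realType) (k : nat) (p q : 'I_k -> R) :
  (2 <= k)%N -> is_distr p -> is_distr q ->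
  argmax_set p != argmax_set q ->
  ((- ln (Num.sqrt ((2 * Num.sqrt (p_first p * p_second p)
                     - p_first p - p_second p + 2) / 2)))%:E
   <= bhat_dist q p)%E.
Proof.
move=> k_ge2 distr_p distr_q neq_argmax.
have [[p_ge0 _] [q_ge0 _]] := (distr_p, distr_q).
have [a [b [a_max ba qa_le_qb]]] := argmax_set_neq_witness (ltnW k_ge2) neq_argmax.
have p2_ge0 := p_second_ge0 p_ge0.
have p21 := p_second_le_first p k_ge2.
have p1a := p_first_le_max a_max.
rewrite sqrt_gap_sqr ?(le_trans p2_ge0) //.
set d := Num.sqrt (p_first p) - Num.sqrt (p_second p).
have d_ge0 : 0 <= d by rewrite subr_ge0 ler_sqrt ?(le_trans p2_ge0).
have d_le : d <= Num.sqrt (p a) - Num.sqrt (p b).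
  by apply: lerB; rewrite ler_sqrt ?p_ge0 ?p1a ?(p_second_ge_other a_max ba).
have d_le1 : d <= 1.
  have : Num.sqrt (p a) <= 1 by rewrite -sqrtr1 ler_sqrt // is_distr_le1.
  by have := sqrtr_ge0 (p b); lra.
set s := Num.sqrt (1 - d ^+ 2 / 2).
have s_gt0 : 0 < s by rewrite sqrtr_gt0; nra.
have s_sq : s ^+ 2 = 1 - d ^+ 2 / 2 by rewrite sqr_sqrtr //; nra.
apply: bhat_dist_ge => //; apply: le_trans (bhat_coef_le_split distr_p distr_q ba s_gt0) _.
have qa_qb : Num.sqrt (q a) <= Num.sqrt (q b) by rewrite ler_sqrt.
have := two_point_bound (sqrtr_ge0 (p b)) (sqrtr_ge0 (q a)) qa_qb d_ge0 d_le s_gt0 s_sq.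
by rewrite !sqr_sqrtr // !sqrtrM.
Qed.
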